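(* Let $\mathbf C=(\mathbf C_\tau,q_n^{\mathbf C},\mathsf e_i^{\mathbf C})$ be a finite dimensional clone $\tau$-algebra and $\overline{\mathbf R}_{\mathbf C}$ the clone $\rho_{\mathbf C}$-algebra of $\mathbf C$-representable functions. Then: (i) $\overline{\mathbf R}_{\mathbf C}$ is minimal; (ii) $\mathbf C$ is minimal if and only if $R_{\mathbf C}=\mathrm{Clo}\,\mathbf C_\tau$.
   Context: A clone $\tau$-algebra is an algebra $\mathbf C=(C,\sigma^{\mathbf C}\ (\sigma\in\tau),q_n^{\mathbf C}\ (n\ge0),\mathsf e_i^{\mathbf C}\ (i\ge1))$ with $\mathsf e_i$ nullary, $q_n$ of arity $n+1$, satisfying: (C1) $q_n(\mathsf e_i,x_1,\dots,x_n)=x_i$ ($1\le i\le n$); (C2) $q_n(\mathsf e_j,x_1,\dots,x_n)=\mathsf e_j$ ($j>n$); (C3) $q_n(x,\mathsf e_1,\dots,\mathsf e_n)=x$; (C4) $q_k(x,y_1,\dots,y_k)=q_n(x,y_1,\dots,y_k,\mathsf e_{k+1},\dots,\mathsf e_n)$ ($n>k$); (C5) $q_n(q_n(x,\mathbf y),\mathbf z)=q_n(x,q_n(y_1,\mathbf z),\dots,q_n(y_n,\mathbf z))$; (C6) $q_n(\sigma(x_1,\dots,x_k),\mathbf y)=\sigma(q_n(x_1,\mathbf y),\dots,q_n(x_k,\mathbf y))$ for $\sigma\in\tau$ of arity $k$. $\mathbf C_\tau$ is the $\tau$-reduct. $a$ is independent of $\mathsf e_n$ if $q_n(a,\mathsf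 e_1,\dots,\mathsf e_{n-1},\mathsf e_{n+1})=a$; its dimension is the largest $n$ it depends on ($0$ if none, infinite if infinitely many); finite dimensional means every element has finite dimension. $\mathbf C$ is minimal if $C$ is the smallest subset containing all $\mathsf e_i^{\mathbf C}$ and closed under the operations $\sigma^{\mathbf C}$, $\sigma\in\tau$. A function $f:C^k\to C$ is $\mathbf C$-representable if $f(\mathsf e_1,\dots,\mathsf e_k)$ has dimension $\le k$ and $f(a_1,\dots,a_k)=q_k(f(\mathsf e_1,\dots,\mathsf e_k),a_1,\dots,a_k)$ for all $a_i$; $R_{\mathbf C}$ is the set of them. $\rho_{\mathbf C}$ has an operation symbol $\overline f$ of arity $k$ for each $k$-ary $f\in R_{\mathbf C}$, and $\overline{\mathbf R}_{\mathbf C}=(C,f\ (f\in R_{\mathbf C}),q_n^{\mathbf C},\mathsf e_i^{\mathbf C})$ is a clone $\rho_{\mathbf C}$-algebra. $\mathrm{Clo}\,\mathbf C_\tau$ is the clone of term operations of $\mathbf C_\tau$ (smallest set of finitary operations on $C$, nullary included, containing the projections and the basic operations and closed under composition and under restriction, i.e. dropping a last argument on which the operation does not depend). *)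

From mathcomp Require Import all_boot.
Set Implicit Arguments. Unset Strict Implicit. Unset Printing Implicit Defensive.

(* Conventions: the constants e_1, e_2, ... of the paper are indexed from 0:
   [e i] stands for the paper's e_{i+1}. *)

Definition ext_by (C : Type) (e : nat -> C) (k n : nat) (ys : 'I_k -> C)
  : 'I_n -> C :=
  fun i => match (insub (val i) : option 'I_k) with
           | Some j => ys j
           | None => e (val i)
           end.

Record CloneAlg (S : Type) (ar : S -> nat) := {
  carrier :> Type;
  sop : forall s : S, ('I_(ar s) -> carrier) -> carrier;
  q : forall n : nat, carrier -> ('I_n -> carrier) -> carrier;
  e : nat -> carrier;
  cl_ax1 : forall n (i : 'I_n) (xs : 'I_n -> carrier),
      q (e (val i)) xs = xs i;
  cl_ax2 : forall n j (xs : 'I_n -> carrier), n <= j -> q (e j) xs = e j;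
  cl_ax3 : forall n x, q x (fun i : 'I_n => e (val i)) = x;
  cl_ax4 : forall k n x (ys : 'I_k -> carrier), k < n ->
      q x ys = q x (@ext_by carrier e k n ys);
  cl_ax5 : forall n x (ys zs : 'I_n -> carrier),
      q (q x ys) zs = q x (fun i => q (ys i) zs);
  cl_ax6 : forall n s (xs : 'I_(ar s) -> carrier) (ys : 'I_n -> carrier),
      q (sop xs) ys = sop (fun j => q (xs j) ys)
}.

Arguments CloneAlg : clear implicits.
Arguments sop {S ar} c s _.
Arguments q {S ar} c n _ _.
Arguments e {S ar} c _.

Section Defs.
Variables (S : Type) (ar : S -> nat) (A : CloneAlg S ar).

(* a is independent of the paper's e_{m+1}:
   q_{m+1}(a, e_1, ..., e_m, e_{m+2}) = a *)
Definition independent (a : A) (m : nat) : Prop :=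
  q A m.+1 a (fun i : 'I_m.+1 => if val i < m then e A (val i) else e A m.+1) = a.

(* dimension of a is <= k : a is independent of every e_n with n > k
   (paper indexing), i.e. of every e A m with m >= k *)
Definition dim_le (a : A) (k : nat) : Prop :=
  forall m, k <= m -> independent a m.

Definition finite_dimensional : Prop := forall a : A, exists k, dim_le a k.

Definition representable (k : nat) (f : ('I_k -> A) -> A) : Prop :=
  dim_le (f (fun i => e A (val i))) k /\
  forall xs : 'I_k -> A, f xs = q A k (f (fun i => e A (val i))) xs.

Definition rho_sym : Type :=
  {p : {k : nat & ('I_k -> A) -> A} | representable (projT2 p)}.
Definition rho_ar (s : rho_sym) : nat := projT1 (sval s).
Definition rho_op (s : rho_sym) : ('I_(rho_ar s) -> A) -> A := projT2 (sval s).

Inductive inClo : forall k : nat, (('I_k -> A) -> A) -> Prop :=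
  | clo_proj : forall n (i : 'I_n), inClo (fun xs : 'I_n -> A => xs i)
  | clo_basic : forall s : S, inClo (sop A s)
  | clo_comp : forall k n (f : ('I_k -> A) -> A) (g : 'I_k -> ('I_n -> A) -> A),
      inClo f -> (forall j, inClo (g j)) ->
      inClo (fun xs : 'I_n -> A => f (fun j => g j xs))
  | clo_restr : forall n (f : ('I_n.+1 -> A) -> A) (c : A),
      inClo f ->
      (forall xs ys : 'I_n.+1 -> A,
          (forall i : 'I_n.+1, val i < n -> xs i = ys i) -> f xs = f ys) ->
      inClo (fun xs : 'I_n -> A =>
               f (fun i : 'I_n.+1 => if unlift ord_max i is Some j then xs j else c)).

End Defs.

Inductive generated (C : Type) (e0 : nat -> C) (T : Type) (art : T -> nat)
    (ops : forall t : T, ('I_(art t) -> C) -> C) : C -> Prop :=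
  | gen_e : forall i, generated e0 ops (e0 i)
  | gen_op : forall t (xs : 'I_(art t) -> C),
      (forall j, generated e0 ops (xs j)) -> generated e0 ops (ops t xs).

Definition minimal_wrt (C : Type) (e0 : nat -> C) (T : Type) (art : T -> nat)
    (ops : forall t : T, ('I_(art t) -> C) -> C) : Prop :=
  forall x : C, generated e0 ops x.

Definition minimal (S : Type) (ar : S -> nat) (A : CloneAlg S ar) : Prop :=
  minimal_wrt (e A) (sop A).

Definition Rbar_minimal (S : Type) (ar : S -> nat) (A : CloneAlg S ar) : Prop :=
  minimal_wrt (e A) (@rho_op S ar A).

From mathcomp Require Import all_boot.
From Stdlib Require Import FunctionalExtensionality.

Set Implicit Arguments. Unset Strict Implicit. Unset Printing Implicit Defensive.

(* If [a] has dimension at most [k], then q_n(a, -) = q_k(a, -) for every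
   n >= k: independence of e_{m+1} together with C1, C2 and C5 lets one replace
   the (m+1)-st argument of q_{m+1}(a, -) by e_{m+2}, and C4 then identifies
   q_{m+1}(a, -) with q_m(a, -).  Hence C5 holds across different arities,
   which shows that every term operation is representable, and an element [a] of dimension [k] is the
   value of the representable operation q_k(a, -) at e_1, ..., e_k, which is
   (i).  If C is minimal, [a] = f(e_1, ..., e_k) is a tau-term in finitely many
   e_i, so q_n(a, -) is a term operation for large n; as it ignores its
   arguments beyond the k-th, restriction shows f = q_k(a, -) is one as well.
   Conversely, term operations preserve the subuniverse generated by the e_i,
   and every element is q_k(a, e_1, ..., e_k). *)

Section CloneAlgebra.
Variables (S : Type) (ar : S -> nat) (A : CloneAlg S ar).

Local Notation es n := (fun i : 'I_n => e A (val i)).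

(* Argument lists indexed by [nat] avoid casts between ordinal types. *)
Definition qsub n (a : A) (ws : nat -> A) : A := q A n a (fun i : 'I_n => ws i).

Definition pad k (xs : 'I_k -> A) : nat -> A :=
  fun i => if insub i is Some j then xs j else e A i.

Lemma pad_ord k (xs : 'I_k -> A) (j : 'I_k) : pad xs j = xs j.
Proof. by rewrite /pad valK. Qed.

Lemma pad_lt k (xs : 'I_k -> A) i (lt_ik : i < k) : pad xs i = xs (Ordinal lt_ik).
Proof. by rewrite -[i]/(val (Ordinal lt_ik)) pad_ord. Qed.

Lemma q_qsub n a (xs : 'I_n -> A) : q A n a xs = qsub n a (pad xs).
Proof. by congr (q A n a); extensionality i; rewrite pad_ord. Qed.

Lemma eq_qsub n a ws vs :
  (forall i, i < n -> ws i = vs i) -> qsub n a ws = qsub n a vs.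
Proof. by move=> eq_wv; congr (q A n a); extensionality i; rewrite eq_wv. Qed.

Lemma qsub_e_lt n i ws : i < n -> qsub n (e A i) ws = ws i.
Proof. by move=> lt_in; rewrite /qsub -[i]/(val (Ordinal lt_in)) cl_ax1. Qed.

Lemma qsub_e_ge n i ws : n <= i -> qsub n (e A i) ws = e A i.
Proof. exact: cl_ax2. Qed.

Lemma qsubA n a ys zs :
  qsub n (qsub n a ys) zs = qsub n a (fun i => qsub n (ys i) zs).
Proof. exact: cl_ax5. Qed.

Lemma qsub_widen k n a ws : k <= n ->
  qsub k a ws = qsub n a (fun i => if i < k then ws i else e A i).
Proof.
rewrite leq_eqVlt => /predU1P [<- | lt_kn]; first by apply: eq_qsub => i ->.
rewrite /qsub (cl_ax4 _ _ lt_kn); congr (q A n a); extensionality i.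
by rewrite /ext_by; case: insubP => [j -> <- | /negbTE ->].
Qed.

Lemma independentE a m : independent a m <->
  qsub m.+1 a (fun i => if i < m then e A i else e A m.+1) = a.
Proof. by []. Qed.

Lemma qsub_indep a m ws : independent a m -> qsub m.+1 a ws = qsub m a ws.
Proof.
move/independentE=> indep_a.
have shift vs :
    qsub m.+1 a vs = qsub m.+1 a (fun i => if i < m then vs i else e A m.+1).
  rewrite -{1}indep_a qsubA; apply: eq_qsub => i _.
  case: ifP => lt_im; last exact: qsub_e_ge.
  by rewrite qsub_e_lt // ltnW.
rewrite (qsub_widen a ws (leqnSn m)) [LHS]shift [RHS]shift.
by apply: eq_qsub => i _; case: (i < m).
Qed.

Lemma qsub_dim a k n ws : dim_le a k -> k <= n -> qsub n a ws = qsub k a ws.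
Proof.
move=> dim_a; elim: n => [|n IHn]; first by rewrite leqn0 => /eqP ->.
rewrite leq_eqVlt => /predU1P [-> // | /[!ltnS] le_kn].
by rewrite qsub_indep ?IHn //; apply: dim_a.
Qed.

(* C5 for substitutions of different arities: only [a] needs small dimension. *)
Lemma qsub_comp a k n bs xs : dim_le a k ->
  qsub n (qsub k a bs) xs = qsub k a (fun i => qsub n (bs i) xs).
Proof.
move=> dim_a; have le_kM := leq_maxl k n; have le_nM := leq_maxr k n.
rewrite (qsub_widen _ xs le_nM) -(qsub_dim bs dim_a le_kM) qsubA.
rewrite (qsub_dim _ dim_a le_kM); apply: eq_qsub => i _.
by rewrite (qsub_widen _ xs le_nM).
Qed.

Lemma q_comp a k n (bs : 'I_k -> A) (xs : 'I_n -> A) : dim_le a k ->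
  q A n (q A k a bs) xs = q A k a (fun j => q A n (bs j) xs).
Proof.
move=> dim_a; rewrite !q_qsub qsub_comp //; apply: eq_qsub => i lt_ik.
by rewrite !pad_lt q_qsub.
Qed.

Definition snoc n (xs : 'I_n -> A) (c : A) : 'I_n.+1 -> A :=
  fun i => if unlift ord_max i is Some j then xs j else c.

Lemma pad_snoc n (xs : 'I_n -> A) c i : i < n -> pad (snoc xs c) i = pad xs i.
Proof.
move=> lt_in; rewrite (pad_lt _ (leqW lt_in)) (pad_lt _ lt_in) /snoc.
case: unliftP => [j /(congr1 val) /= eq_ij | /(congr1 val) /= eq_in].
  by congr xs; apply: val_inj; rewrite /= eq_ij /= /bump leqNgt ltn_ord.
by exfalso; move: lt_in; rewrite eq_in ltnn.
Qed.

Lemma q_snoc a n (xs : 'I_n -> A) c : dim_le a n ->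
  q A n.+1 a (snoc xs c) = q A n a xs.
Proof.
move=> dim_a; rewrite !q_qsub (qsub_dim _ dim_a (leqnSn n)).
by apply: eq_qsub => i; apply: pad_snoc.
Qed.

Lemma eq_q_dim a n (xs ys : 'I_n.+1 -> A) : dim_le a n ->
  (forall i : 'I_n.+1, i < n -> xs i = ys i) -> q A n.+1 a xs = q A n.+1 a ys.
Proof.
move=> dim_a eq_xy; rewrite !q_qsub !(qsub_dim _ dim_a (leqnSn n)).
by apply: eq_qsub => i lt_in; rewrite !(pad_lt _ (leqW lt_in)) eq_xy.
Qed.

Lemma dim_le_e i k : i < k -> dim_le (e A i) k.
Proof.
move=> lt_ik m le_km; have lt_im := leq_trans lt_ik le_km.
by apply/independentE; rewrite qsub_e_lt ?lt_im // ltnW.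
Qed.

Lemma dim_le_sop s (xs : 'I_(ar s) -> A) k :
  (forall j, dim_le (xs j) k) -> dim_le (sop A s xs) k.
Proof.
move=> dim_xs m le_km; rewrite /independent cl_ax6; congr (sop A s).
by extensionality j; apply: dim_xs.
Qed.

Lemma dim_le_q a k n (bs : 'I_k -> A) : dim_le a k ->
  (forall j, dim_le (bs j) n) -> dim_le (q A k a bs) n.
Proof.
move=> dim_a dim_bs m le_nm; rewrite /independent q_comp //; congr (q A k a).
by extensionality j; apply: dim_bs.
Qed.

Lemma representable_q a k : dim_le a k -> representable (q A k a).
Proof. by move=> dim_a; split=> [|xs]; rewrite cl_ax3. Qed.

Lemma representableE k (f : ('I_k -> A) -> A) :
  representable f -> f = q A k (f (es k)).
Proof. by case=> _ f_q; extensionality xs. Qed.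

Lemma inClo_representable k (f : ('I_k -> A) -> A) : inClo f -> representable f.
Proof.
elim=> {k f} [n i | s | k n f g _ f_rep _ g_rep | n f c _ f_rep f_indep].
- have -> : (fun xs : 'I_n -> A => xs i) = q A n (e A i).
    by extensionality xs; rewrite cl_ax1.
  exact/representable_q/dim_le_e.
- have -> : sop A s = q A (ar s) (sop A s (es _)).
    extensionality xs; rewrite cl_ax6; congr (sop A s).
    by extensionality j; rewrite cl_ax1.
  by apply: representable_q; apply: dim_le_sop => j; apply/dim_le_e/ltn_ord.
- have -> : (fun xs => f (fun j => g j xs)) =
            q A n (q A k (f (es k)) (fun j => g j (es n))).
    extensionality xs; rewrite q_comp; last exact: f_rep.1.
    rewrite f_rep.2; congr (q A k _); extensionality j; exact: (g_rep j).2.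
  apply: representable_q; apply: dim_le_q => [|j].
  + exact: f_rep.1.
  + exact: (g_rep j).1.
- have f_q := f_rep.2; set a := f (es n.+1) in f_q.
  have dim_a : dim_le a n.
    move=> m; rewrite leq_eqVlt => /predU1P [<- | lt_nm]; last exact: f_rep.1.
    by rewrite /independent -f_q; apply: f_indep => i ->.
  have -> : (fun xs => f (snoc xs c)) = q A n a.
    by extensionality xs; rewrite f_q q_snoc.
  exact: representable_q.
Qed.

Lemma generated_inClo k (f : ('I_k -> A) -> A) : inClo f -> forall xs,
  (forall i, generated (e A) (sop A) (xs i)) -> generated (e A) (sop A) (f xs).
Proof.
elim=> {k f} [n i | s | k n f g _ IHf _ IHg | n f c _ IHf f_indep] xs gen_xs.
- exact: gen_xs.
- exact: gen_op.
- by apply: IHf => j; apply: IHg.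
- rewrite (f_indep _ (snoc xs (e A 0))) => [|i lt_in]; last first.
    by rewrite /snoc; case: unliftP => // eq_i; rewrite eq_i ltnn in lt_in.
  apply: IHf => i; rewrite /snoc; case: (unlift ord_max i) => [j|].
  + exact: gen_xs.
  + exact: gen_e.
Qed.

Lemma generated_inClo_q a : generated (e A) (sop A) a ->
  exists N, forall n, N <= n -> inClo (q A n a).
Proof.
elim=> [i | s xs _ IHxs].
  exists i.+1 => n lt_in.
  have -> : q A n (e A i) = fun xs => xs (Ordinal lt_in).
    by extensionality xs; rewrite -[i]/(val (Ordinal lt_in)) cl_ax1.
  exact: clo_proj.
have [N clo_N] := fin_all_exists IHxs.
exists (\max_j N j) => n le_Nn.
have -> : q A n (sop A s xs) = fun ys => sop A s (fun j => q A n (xs j) ys).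
  by extensionality ys; rewrite cl_ax6.
apply: clo_comp => [|j]; first exact: clo_basic.
by apply: clo_N; apply: leq_trans le_Nn; apply: leq_bigmax.
Qed.

Lemma inClo_q_restrict a k n : dim_le a k -> k <= n ->
  inClo (q A n a) -> inClo (q A k a).
Proof.
move=> dim_a; elim: n => [|n IHn]; first by rewrite leqn0 => /eqP ->.
rewrite leq_eqVlt => /predU1P [-> // | /[!ltnS] le_kn clo_a]; apply: IHn => //.
have dim_an : dim_le a n by move=> m /(leq_trans le_kn); apply: dim_a.
have -> : q A n a = fun xs => q A n.+1 a (snoc xs (e A 0)).
  by extensionality xs; rewrite q_snoc.
by apply: clo_restr => // xs ys; apply: eq_q_dim.
Qed.

End CloneAlgebra.

Theorem proposition11p12 (S : Type) (ar : S -> nat) (A : CloneAlg S ar) :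
  finite_dimensional A ->
  Rbar_minimal A /\
  (minimal A <-> (forall (k : nat) (f : ('I_k -> A) -> A),
                     representable f <-> inClo f)).
Proof.
move=> fin_dim; split.
  move=> x; have [k dim_x] := fin_dim x.
  pose s : rho_sym A := exist _ (existT _ k (q A k x)) (representable_q dim_x).
  have -> : x = @rho_op S ar A s (fun i => e A (val i)) by rewrite /rho_op /= cl_ax3.
  by apply: gen_op => j; apply: gen_e.
split=> [min_A k f | all_rep x].
  split=> [f_rep | /inClo_representable //].
  have [N clo_N] := generated_inClo_q (min_A (f (fun i => e A (val i)))).
  rewrite (representableE f_rep).
  exact: inClo_q_restrict f_rep.1 (leq_maxl k N) (clo_N _ (leq_maxr k N)).
have [k dim_x] := fin_dim x.
rewrite -(cl_ax3 k x); apply: generated_inClo => [|i]; last exact: gen_e.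
exact/all_rep/representable_q.
Qed.
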